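(* Let $\mathbf x,\mathbf y\in\mathbb R^\infty$ be such that the functions $t\mapsto\|\mathbf x\|_t$ and $t\mapsto\|\mathbf y\|_t$ on $(0,\infty)$ are not identical. Then the set $\{t\in(0,\infty):\|\mathbf x\|_t=\|\mathbf y\|_t\}$ is finite. Consequently, for any finite set $\mathcal X\subseteq\mathbb R^\infty$, the set of points $s\in(0,\infty)$ for which there exist $\mathbf x,\mathbf y\in\mathcal X$ with $\|\mathbf x\|_s=\|\mathbf y\|_s$ but $t\mapsto\|\mathbf x\|_t$ not identical to $t\mapsto\|\mathbf y\|_t$ is finite.
   Context: $\mathbb R^\infty$ is the set of real sequences with only finitely many nonzero entries, and $\|\mathbf x\|_t=(\sum_n|x_n|^t)^{1/t}$ for $t\in(0,\infty)$. *)

From Stdlib Require Import Reals List.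
Open Scope R_scope.

(* Real power a^t for a >= 0 and t > 0, with the convention 0^t = 0
   (Stdlib's Rpower 0 t = exp (t * ln 0) = 1, which is wrong for us). *)
Definition rpow (a t : R) : R := if Req_EM_T a 0 then 0 else Rpower a t.

(* An element of R^infty (real sequence with finitely many nonzero entries)
   is represented by the finite list of its first entries; all later
   entries are 0. *)
Definition Rinf := list R.

Definition pnorm (x : Rinf) (t : R) : R :=
  rpow (fold_right Rplus 0 (map (fun a => rpow (Rabs a) t) x)) (/ t).

Definition finite_set (P : R -> Prop) : Prop :=
  exists l : list R, forall t, P t -> In t l.

From Coquelicot Require Import Coquelicot.
From Stdlib Require Import Reals List Sorted Lra Lia Classical.
Open Scope R_scope.

(* For t > 0 the power sum  sum_n |x_n|^t  of a finitely
   supported sequence is an exponential sum  sum_i c_i e^(r_i t)  with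
   r_i = ln |x_i|, and  ||x||_t = ||y||_t  iff the two power sums agree, i.e.
   iff the exponential sum  P_x - P_y  (with at most |x|+|y| terms) vanishes.
   The core fact is a Descartes-type bound: an exponential sum with n terms
   that vanishes at n+1 distinct points vanishes everywhere.  It is proved by
   induction on n: multiplying by e^(-r t) makes one term constant, Rolle's
   theorem turns n+1 zeros into n zeros of the derivative, which is an
   exponential sum with n-1 terms; so the derivative is identically zero and
   the function is constant, hence zero.  An infinite set of reals contains
   strictly increasing lists of every length, so a nonzero exponential sum
   has finitely many zeros; this gives the first claim. *)

Lemma finite_set_subset (P Q : R -> Prop) :
  (forall t, P t -> Q t) -> finite_set Q -> finite_set P.
Proof. intros HPQ [L HL]. exists L; auto. Qed.

Lemma finite_set_union {T : Type} (A : list T) (Q : T -> R -> Prop) :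
  (forall a, In a A -> finite_set (Q a)) ->
  finite_set (fun s => exists a, In a A /\ Q a s).
Proof.
  induction A as [|a A IH]; intros HQ.
  - exists nil. intros t [b [[] _]].
  - destruct (HQ a (or_introl eq_refl)) as [La Ha].
    destruct IH as [LA HA]; [intros b Hb; apply HQ; right; exact Hb|].
    exists (La ++ LA). intros t [b [[<-|Hb] Hq]]; apply in_or_app.
    + left; apply Ha; exact Hq.
    + right; apply HA; exists b; auto.
Qed.

Fixpoint insert_sorted (x : R) (l : list R) : list R :=
  match l with
  | nil => x :: nil
  | a :: l' => if Rlt_dec x a then x :: l else a :: insert_sorted x l'
  end.

Lemma insert_sorted_length x l : length (insert_sorted x l) = Datatypes.S (length l).
Proof. induction l as [|a l IH]; simpl; [|destruct Rlt_dec; simpl; rewrite ?IH]; auto. Qed.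

Lemma insert_sorted_Forall (P : R -> Prop) x l :
  P x -> Forall P l -> Forall P (insert_sorted x l).
Proof.
  intros Hx Hl. induction Hl as [|a l Ha Hl IH]; simpl.
  - constructor; auto.
  - destruct Rlt_dec; constructor; auto.
Qed.

Lemma insert_sorted_HdRel a x l :
  HdRel Rlt a l -> a < x -> HdRel Rlt a (insert_sorted x l).
Proof.
  intros Hl Hax. destruct l as [|b l]; simpl.
  - constructor; exact Hax.
  - destruct Rlt_dec; constructor; [exact Hax | exact (HdRel_inv Hl)].
Qed.

Lemma insert_sorted_Sorted x l :
  Sorted Rlt l -> ~ In x l -> Sorted Rlt (insert_sorted x l).
Proof.
  induction l as [|b l IH]; intros Hl Hx; simpl.
  - repeat constructor.
  - apply Sorted_inv in Hl as [Hl Hbl].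
    destruct (Rlt_dec x b) as [Hxb|Hxb].
    + constructor; [constructor; auto | constructor; exact Hxb].
    + assert (Hbx : b < x).
      { destruct (Req_dec x b) as [->|]; [exfalso; apply Hx; left; auto | lra]. }
      constructor.
      * apply IH; [exact Hl | intro; apply Hx; right; auto].
      * apply insert_sorted_HdRel; assumption.
Qed.

Lemma infinite_sorted_lists (P : R -> Prop) :
  ~ finite_set P ->
  forall n, exists z, Sorted Rlt z /\ length z = n /\ Forall P z.
Proof.
  intros Hinf. induction n as [|n [z [Hs [Hl Hz]]]].
  - exists nil. repeat constructor.
  - assert (Hnew : exists t, P t /\ ~ In t z).
    { apply NNPP. intro Hno. apply Hinf. exists z. intros t Pt.
      apply NNPP. intro Hn. apply Hno. exists t. auto. }
    destruct Hnew as [t [Pt Ht]].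
    exists (insert_sorted t z). repeat split.
    + apply insert_sorted_Sorted; assumption.
    + rewrite insert_sorted_length, Hl; reflexivity.
    + apply insert_sorted_Forall; assumption.
Qed.

Lemma rolle_between (f f' : R -> R) a b :
  (forall t, derivable_pt_lim f t (f' t)) -> a < b -> f a = f b ->
  exists c, a < c < b /\ f' c = 0.
Proof.
  intros Hd Hab Hfab.
  assert (pr : forall x, a < x < b -> derivable_pt f x)
    by (intros x _; exists (f' x); apply Hd).
  destruct (Rolle f a b pr) as [c [Hc Hc0]]; [|exact Hab|exact Hfab|].
  - intros x _. apply derivable_continuous_pt. exists (f' x). apply Hd.
  - exists c. split; [exact Hc|].
    rewrite <- Hc0. symmetry. apply derive_pt_eq_0, Hd.
Qed.

(* Between consecutive zeros of f lies a zero of f': k+1 increasing zeros of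
   f yield k increasing zeros of f', all to the right of the first one. *)
Lemma rolle_sorted (f f' : R -> R) :
  (forall t, derivable_pt_lim f t (f' t)) ->
  forall z a, Sorted Rlt (a :: z) -> f a = 0 -> Forall (fun t => f t = 0) z ->
  exists s, length s = length z /\ Sorted Rlt s /\ HdRel Rlt a s
            /\ Forall (fun t => f' t = 0) s.
Proof.
  intros Hd. induction z as [|b z IH]; intros a Hs Ha Hz.
  - exists nil. repeat constructor.
  - apply Sorted_inv in Hs as [Hs Hab]. apply HdRel_inv in Hab.
    inversion Hz as [|? ? Hb Hz']; subst.
    destruct (IH b Hs Hb Hz') as [s [Hl [Hss [Hbs Hs0]]]].
    destruct (rolle_between f f' a b Hd Hab (eq_trans Ha (eq_sym Hb)))
      as [c [Hc Hc0]].
    exists (c :: s). repeat split.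
    + simpl; congruence.
    + constructor; [exact Hss|].
      destruct s as [|d s]; constructor. apply HdRel_inv in Hbs. lra.
    + constructor. lra.
    + constructor; assumption.
Qed.

Lemma deriv_zero_const (f f' : R -> R) :
  (forall t, derivable_pt_lim f t (f' t)) -> (forall t, f' t = 0) ->
  forall a b, f a = f b.
Proof.
  intros Hd H0 a b.
  destruct (MVT_gen f a b f') as [c [_ Hc]].
  - intros x _. apply is_derive_Reals, Hd.
  - intros x _. apply derivable_continuous_pt. exists (f' x). apply Hd.
  - rewrite H0 in Hc. lra.
Qed.

Definition expsum (l : list (R * R)) (t : R) : R :=
  fold_right (fun p acc => fst p * exp (snd p * t) + acc) 0 l.

Definition expsum_deriv (l : list (R * R)) : list (R * R) :=
  map (fun p => (fst p * snd p, snd p)) l.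

Definition shift_rates (l : list (R * R)) (r : R) : list (R * R) :=
  map (fun p => (fst p, snd p - r)) l.

Lemma expsum_derivable l t :
  derivable_pt_lim (expsum l) t (expsum (expsum_deriv l) t).
Proof.
  induction l as [|[c r] l IH]; simpl.
  - apply (derivable_pt_lim_const 0).
  - apply derivable_pt_lim_plus; [|exact IH].
    apply is_derive_Reals. auto_derive; [exact I|]. simpl. ring.
Qed.

Lemma expsum_shift_rates l r t :
  expsum (shift_rates l r) t = exp (- r * t) * expsum l t.
Proof.
  induction l as [|[c s] l IH]; simpl; [ring|].
  rewrite IH. replace ((s - r) * t) with (s * t + - r * t) by ring.
  rewrite exp_plus. ring.
Qed.

Lemma expsum_app l1 l2 t : expsum (l1 ++ l2) t = expsum l1 t + expsum l2 t.
Proof. induction l1 as [|p l1 IH]; simpl; [|rewrite IH]; ring. Qed.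

Definition expsum_opp (l : list (R * R)) : list (R * R) :=
  map (fun p => (- fst p, snd p)) l.

Lemma expsum_opp_eq l t : expsum (expsum_opp l) t = - expsum l t.
Proof. induction l as [|p l IH]; simpl; [|rewrite IH]; ring. Qed.

(* Normalising the first term: e^(-r t) (c e^(r t) + F(t)) = c + F'(t), and
   the derivative of the right-hand side is an exponential sum with one term
   fewer. *)
Lemma expsum_normalize c r l t :
  exp (- r * t) * expsum ((c, r) :: l) t = c + expsum (shift_rates l r) t.
Proof.
  rewrite expsum_shift_rates. simpl.
  rewrite Rmult_plus_distr_l, <- Rmult_assoc, (Rmult_comm _ c), Rmult_assoc,
    <- exp_plus.
  replace (- r * t + r * t) with 0 by ring. rewrite exp_0. ring.
Qed.

Lemma expsum_normalize_derivable c r l t :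
  derivable_pt_lim (fun u => c + expsum (shift_rates l r) u) t
                   (expsum (expsum_deriv (shift_rates l r)) t).
Proof.
  replace (expsum _ t) with (0 + expsum (expsum_deriv (shift_rates l r)) t)
    by ring.
  apply derivable_pt_lim_plus;
    [apply derivable_pt_lim_const | apply expsum_derivable].
Qed.

Lemma expsum_many_zeros : forall n l z,
  length l = n -> Sorted Rlt z -> (n < length z)%nat ->
  Forall (fun t => expsum l t = 0) z -> forall t, expsum l t = 0.
Proof.
  induction n as [|n IH]; intros [|[c r] l] z Hn Hs Hlen Hz t;
    try reflexivity; try discriminate.
  injection Hn as Hn.
  set (g := fun u => c + expsum (shift_rates l r) u).
  assert (Hg : forall u, g u = exp (- r * u) * expsum ((c, r) :: l) u)
    by (intro u; unfold g; rewrite expsum_normalize; reflexivity).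
  assert (Hg0 : forall u, expsum ((c, r) :: l) u = 0 -> g u = 0)
    by (intros u Hu; rewrite Hg, Hu; ring).
  destruct z as [|a z]; [simpl in Hlen; lia|].
  inversion Hz as [|? ? Ha Hz']; subst.
  destruct (rolle_sorted g _ (expsum_normalize_derivable c r l) z a Hs (Hg0 a Ha)
              (Forall_impl _ Hg0 Hz')) as [s [Hl [Hss [_ Hs0]]]].
  assert (Hderiv0 : forall u, expsum (expsum_deriv (shift_rates l r)) u = 0).
  { apply (IH _ s); [|exact Hss| |exact Hs0];
      unfold expsum_deriv, shift_rates; rewrite ?length_map; simpl in Hlen; lia. }
  assert (Hgt : g t = 0).
  { rewrite (deriv_zero_const g _ (expsum_normalize_derivable c r l) Hderiv0 t a).
    exact (Hg0 a Ha). }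
  rewrite Hg in Hgt.
  apply Rmult_integral in Hgt as [Hexp|]; [|assumption].
  exfalso. exact (Rgt_not_eq _ _ (exp_pos _) Hexp).
Qed.

Lemma expsum_zeros_finite (l : list (R * R)) (P : R -> Prop) :
  (forall t, P t -> expsum l t = 0) -> ~ (forall t, expsum l t = 0) ->
  finite_set P.
Proof.
  intros HP Hnz. apply NNPP. intro Hinf.
  destruct (infinite_sorted_lists P Hinf (Datatypes.S (length l)))
    as [z [Hs [Hl Hz]]].
  apply Hnz, (expsum_many_zeros (length l) l z eq_refl Hs); [lia|].
  exact (Forall_impl _ HP Hz).
Qed.

Definition power_sum (x : Rinf) (t : R) : R :=
  fold_right Rplus 0 (map (fun a => rpow (Rabs a) t) x).

(* The term |a|^t is  1 * e^(ln|a| t), or 0 when a = 0. *)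
Definition power_sum_terms (x : Rinf) : list (R * R) :=
  map (fun a => (if Req_EM_T (Rabs a) 0 then 0 else 1, ln (Rabs a))) x.

Lemma power_sum_expsum x t : power_sum x t = expsum (power_sum_terms x) t.
Proof.
  induction x as [|a x IH]; unfold power_sum in *; simpl; [reflexivity|].
  rewrite IH. unfold rpow, Rpower. destruct Req_EM_T; simpl; [|rewrite Rmult_comm]; ring.
Qed.

Lemma rpow_ge0 a t : 0 <= rpow a t.
Proof. unfold rpow, Rpower. destruct Req_EM_T; [lra | left; apply exp_pos]. Qed.

Lemma power_sum_ge0 x t : 0 <= power_sum x t.
Proof.
  induction x as [|a x IH]; unfold power_sum in *; simpl; [lra|].
  pose proof (rpow_ge0 (Rabs a) t). lra.
Qed.

Lemma rpow_inv_inj A B t :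
  0 < t -> 0 <= A -> 0 <= B -> rpow A (/ t) = rpow B (/ t) -> A = B.
Proof.
  unfold rpow, Rpower. intros Ht HA HB.
  destruct (Req_EM_T A 0), (Req_EM_T B 0); intro H; try congruence.
  - pose proof (exp_pos (/ t * ln B)); lra.
  - pose proof (exp_pos (/ t * ln A)); lra.
  - apply exp_inv, Rmult_eq_reg_l in H; [|apply Rinv_neq_0_compat; lra].
    apply ln_inv; lra.
Qed.

Lemma pnorm_eq_iff x y t :
  0 < t -> (pnorm x t = pnorm y t <-> power_sum x t = power_sum y t).
Proof.
  intro Ht. change (rpow (power_sum x t) (/ t) = rpow (power_sum y t) (/ t)
                    <-> power_sum x t = power_sum y t).
  split; [apply rpow_inv_inj; auto using power_sum_ge0 | intros ->; reflexivity].
Qed.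

Lemma power_sum_sub_expsum x y t :
  power_sum x t - power_sum y t
  = expsum (power_sum_terms x ++ expsum_opp (power_sum_terms y)) t.
Proof. rewrite expsum_app, expsum_opp_eq, !power_sum_expsum. ring. Qed.

Lemma pnorm_coincidences_finite (x y : Rinf) :
  ~ (forall t, 0 < t -> pnorm x t = pnorm y t) ->
  finite_set (fun t => 0 < t /\ pnorm x t = pnorm y t).
Proof.
  intros Hne.
  apply (expsum_zeros_finite (power_sum_terms x ++ expsum_opp (power_sum_terms y))).
  - intros t [Ht Heq]. rewrite <- power_sum_sub_expsum.
    apply pnorm_eq_iff in Heq; [lra | exact Ht].
  - intros Hzero. apply Hne. intros t Ht. apply pnorm_eq_iff; [exact Ht|].
    specialize (Hzero t). rewrite <- power_sum_sub_expsum in Hzero. lra.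
Qed.

Lemma pair_coincidences_finite (x y : Rinf) :
  finite_set (fun s => 0 < s /\ pnorm x s = pnorm y s /\
                       ~ (forall t, 0 < t -> pnorm x t = pnorm y t)).
Proof.
  destruct (classic (forall t, 0 < t -> pnorm x t = pnorm y t)) as [Hid|Hne].
  - exists nil. intros s [_ [_ Hn]]. contradiction.
  - apply (finite_set_subset _ _ (fun s H => conj (proj1 H) (proj1 (proj2 H)))).
    exact (pnorm_coincidences_finite x y Hne).
Qed.

Theorem mainTheorem8 :
  (forall x y : Rinf,
     ~ (forall t, 0 < t -> pnorm x t = pnorm y t) ->
     finite_set (fun t => 0 < t /\ pnorm x t = pnorm y t))
  /\
  (forall X : list Rinf,
     finite_set (fun s => 0 < s /\
       exists x y, In x X /\ In y X /\ pnorm x s = pnorm y s /\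
                   ~ (forall t, 0 < t -> pnorm x t = pnorm y t))).
Proof.
  split; [exact pnorm_coincidences_finite|].
  intros X.
  apply (finite_set_subset _ (fun s => exists x, In x X /\ exists y, In y X /\
           (0 < s /\ pnorm x s = pnorm y s /\
            ~ (forall t, 0 < t -> pnorm x t = pnorm y t)))).
  - intros s [Hs [x [y [Hx [Hy [Heq Hne]]]]]].
    exists x; split; [exact Hx|]. exists y; auto.
  - apply finite_set_union. intros x _.
    apply finite_set_union. intros y _.
    apply pair_coincidences_finite.
Qed.
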